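(* Let $\ell>0$. For any initial datum $S(0)\in\mathbb R_+$ there exists a unique positive solution $S(t)\in\mathbb R_+$ of the ODE $\frac{d}{dt}S(t)=A_\ell(S(t))$. This solution is bounded with continuous first derivative for all $t\ge0$; moreover $\lim_{t\to\infty}S(t)=1$ and $0\le S(t)\le\max\{S(0),1\}$ for all $t\ge0$.
   Context: $\mathbb R_+=\{x\in\mathbb R:x\ge0\}$. With $\Phi$ the standard normal cdf: for $x>0$, $D_\ell(x)=2\ell^2e^{\ell^2(x-1)}\Phi\big(\tfrac{\ell(1-2x)}{\sqrt{2x}}\big)$, $\Gamma_\ell(x)=D_\ell(x)+2\ell^2\Phi\big(-\tfrac{\ell}{\sqrt{2x}}\big)$, $A_\ell(x)=-2xD_\ell(x)+\Gamma_\ell(x)$; and $D_\ell(0)=\Gamma_\ell(0)=A_\ell(0)=2\ell^2e^{-\ell^2}$. *)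

From Stdlib Require Import Reals Lra.
From Coquelicot Require Import Coquelicot.
Open Scope R_scope.

Definition Phi (x : R) : R :=
  RInt_gen (fun u => exp (- u ^ 2 / 2) / sqrt (2 * PI))
           (Rbar_locally m_infty) (at_point x).

Definition D_ (l x : R) : R :=
  if Rle_dec x 0 then 2 * l ^ 2 * exp (- l ^ 2)
  else 2 * l ^ 2 * exp (l ^ 2 * (x - 1)) * Phi (l * (1 - 2 * x) / sqrt (2 * x)).

Definition Gamma_ (l x : R) : R :=
  if Rle_dec x 0 then 2 * l ^ 2 * exp (- l ^ 2)
  else D_ l x + 2 * l ^ 2 * Phi (- l / sqrt (2 * x)).

Definition A_ (l x : R) : R :=
  if Rle_dec x 0 then 2 * l ^ 2 * exp (- l ^ 2)
  else - 2 * x * D_ l x + Gamma_ l x.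

Definition is_solution (l S0 : R) (S : R -> R) : Prop :=
  S 0 = S0 /\
  (forall t, 0 <= t -> 0 <= S t) /\
  (forall t, 0 < t -> is_derive S t (A_ l (S t))) /\
  filterlim (fun h => (S h - S 0) / h) (at_right 0) (locally (A_ l (S 0))).

(* For x > 0 and b = - l / sqrt (2 x), A_l(x) is a positive multiple of K_b(1) - K_b(2 x - 1),
   where K_b(c) = c Phi(b c) e^{b^2 c^2 / 2} is strictly increasing because its derivative is
   e^{b^2 c^2 / 2} times the second lower partial moment of the Gaussian at b c.  Hence A_l > 0
   on (-oo, 1), A_l(1) = 0 and A_l < 0 on (1, oo).  By Mills' inequality A_l is continuous at 0,
   and its derivative is bounded on bounded sets, so A_l is locally Lipschitz.

   Existence is by separation of variables: t(S) = int_{S0}^S dz / A_l(z) is strictly increasing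
   and unbounded as S -> 1, since A_l vanishes at most linearly at 1, so its inverse is a global
   solution staying between S0 and 1 and converging to 1 (for S0 > 1, reflect about 1).
   Uniqueness: for two solutions, (S1 - S2)^2 e^{-2 L t} is nonincreasing and O(t^2) at 0.

   The improper integral Phi is identified with 1/2 + int_0^{x / sqrt 2} e^{-s^2} ds / sqrt PI
   through the identity (int_0^z e^{-s^2} ds)^2 + int_0^1 e^{-z^2 (1 + t^2)} / (1 + t^2) dt = PI / 4. *)

From Stdlib Require Import Reals Lra Psatz ClassicalEpsilon Ranalysis5.
From Coquelicot Require Import Coquelicot.
Open Scope R_scope.

Lemma ex_derive_continuous_R (f : R -> R) (x : R) : ex_derive f x -> continuous f x.
Proof. apply (ex_derive_continuous (K := R_AbsRing) (V := R_NormedModule)). Qed.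

Lemma is_derive_continuous (f : R -> R) (x d : R) : is_derive f x d -> continuous f x.
Proof. intros Hd; apply ex_derive_continuous_R; now exists d. Qed.

Lemma is_derive_continuity_pt (f : R -> R) (x d : R) : is_derive f x d -> continuity_pt f x.
Proof. intros Hd; apply continuity_pt_filterlim, (is_derive_continuous _ _ _ Hd). Qed.

Lemma exp_le_exp (x y : R) : x <= y -> exp x <= exp y.
Proof. intros [H|H]; [left; now apply exp_increasing | rewrite H; lra]. Qed.

Lemma lim_m_infty_lt_incr (f g : R -> R) (b : Rbar) (l : R) :
  (forall x y : R, x < y -> Rbar_lt y b -> f x < f y) ->
  (forall x : R, Rbar_lt x b -> g x <= f x) ->
  is_lim g m_infty l -> forall y : R, Rbar_lt y b -> l < f y.
Proof.
  intros Hf Hgf Hl y Hy.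
  assert (Hyb : Rbar_lt (y - 1) b) by (destruct b; simpl in *; try tauto; lra).
  apply Rle_lt_trans with (f (y - 1)); [|apply Hf; auto; lra].
  apply (is_lim_le_loc g (fun _ => f (y - 1)) m_infty l (f (y - 1))); [|exact Hl | apply is_lim_const].
  exists (y - 1); intros x Hx.
  assert (Hxb : Rbar_lt x b) by (destruct b; simpl in *; try tauto; lra).
  apply Rle_trans with (f x); [apply Hgf, Hxb | left; apply Hf; auto].
Qed.

(** * The Gaussian integral *)

Definition gauss (s : R) : R := exp (- s ^ 2).
Definition gauss_int (z : R) : R := RInt gauss 0 z.
Definition gauss_aux (z : R) : R :=
  RInt (fun t => exp (- (z ^ 2 * (1 + t ^ 2))) / (1 + t ^ 2)) 0 1.

Lemma continuous_gauss (s : R) : continuous gauss s.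
Proof. apply ex_derive_continuous_R; unfold gauss; auto_derive; auto. Qed.

Lemma ex_RInt_gauss (a b : R) : ex_RInt gauss a b.
Proof. apply (ex_RInt_continuous (V := R_CompleteNormedModule)); intros; apply continuous_gauss. Qed.

Lemma is_derive_gauss_int (z : R) : is_derive gauss_int z (gauss z).
Proof.
  apply is_derive_RInt with (a := 0); [|apply continuous_gauss].
  apply filter_forall; intros b.
  exact (RInt_correct (V := R_CompleteNormedModule) _ _ _ (ex_RInt_gauss 0 b)).
Qed.

Lemma gauss_int_ge_0 (z : R) : 0 <= z -> 0 <= gauss_int z.
Proof.
  intros Hz; apply RInt_ge_0; auto; [apply ex_RInt_gauss|].
  intros; left; apply exp_pos.
Qed.

Lemma gauss_int_opp (z : R) : gauss_int (- z) = - gauss_int z.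
Proof.
  unfold gauss_int. apply is_RInt_unique.
  apply (is_RInt_ext (fun y => opp (scal (-1) (gauss (-1 * y + 0))))).
  { intros x _; unfold gauss.
    change (- (-1 * exp (- (-1 * x + 0) ^ 2)) = exp (- x ^ 2)).
    replace ((-1 * x + 0) ^ 2) with (x ^ 2) by ring; ring. }
  assert (H : is_RInt gauss (-1 * 0 + 0) (-1 * - z + 0) (RInt gauss 0 z)).
  { replace (-1 * 0 + 0) with 0 by ring; replace (-1 * - z + 0) with z by ring.
    exact (RInt_correct (V := R_CompleteNormedModule) _ _ _ (ex_RInt_gauss 0 z)). }
  exact (is_RInt_opp _ _ _ _ (is_RInt_comp_lin (V := R_NormedModule) _ (-1) 0 0 (- z) _ H)).
Qed.

Lemma is_derive_gauss_aux_RInt (z : R) :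
  is_derive gauss_aux z (RInt (fun t => - 2 * z * exp (- (z ^ 2 * (1 + t ^ 2)))) 0 1).
Proof.
  assert (Hdu : forall u v, Derive (fun x => exp (- (x ^ 2 * (1 + v ^ 2))) / (1 + v ^ 2)) u
                         = - 2 * u * exp (- (u ^ 2 * (1 + v ^ 2)))).
  { intros u v; apply is_derive_unique; auto_derive; [nra|].
    replace (u * (u * 1) * (1 + v * (v * 1))) with (u ^ 2 * (1 + v ^ 2)) by ring.
    field; nra. }
  unfold gauss_aux.
  apply (is_derive_ext_loc (fun x => RInt (fun t => exp (- (x ^ 2 * (1 + t ^ 2))) / (1 + t ^ 2)) 0 1));
    [now apply filter_forall|].
  erewrite <- RInt_ext; [apply is_derive_RInt_param|].
  - apply filter_forall; intros x t _; auto_derive; nra.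
  - intros t _.
    apply continuity_2d_pt_ext with (f := fun u v => - 2 * u * exp (- (u ^ 2 * (1 + v ^ 2)))).
    { intros u v; symmetry; apply Hdu. }
    apply continuity_2d_pt_mult.
    + apply continuity_2d_pt_mult; [apply continuity_2d_pt_const | apply continuity_2d_pt_id1].
    + apply continuity_1d_2d_pt_comp with (f := exp) (g := fun u v => - (u ^ 2 * (1 + v ^ 2))).
      { apply derivable_continuous_pt, derivable_pt_exp. }
      apply continuity_2d_pt_opp; simpl.
      repeat first [ apply continuity_2d_pt_mult | apply continuity_2d_pt_plus
                   | apply continuity_2d_pt_const | apply continuity_2d_pt_id1
                   | apply continuity_2d_pt_id2 ].
  - apply filter_forall; intros x.
    apply (ex_RInt_continuous (V := R_CompleteNormedModule)); intros t _.
    apply ex_derive_continuous_R; auto_derive; nra.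
  - intros t _; apply Hdu.
Qed.

(* Substitute [s = z t]. *)
Lemma RInt_gauss_aux_deriv (z : R) :
  RInt (fun t => - 2 * z * exp (- (z ^ 2 * (1 + t ^ 2)))) 0 1 = - 2 * gauss z * gauss_int z.
Proof.
  apply is_RInt_unique.
  apply (is_RInt_ext (fun t => scal (- 2 * gauss z) (scal z (gauss (z * t + 0))))).
  { intros t _; unfold gauss.
    change (- 2 * exp (- z ^ 2) * (z * exp (- (z * t + 0) ^ 2))
            = - 2 * z * exp (- (z ^ 2 * (1 + t ^ 2)))).
    replace (- (z ^ 2 * (1 + t ^ 2))) with (- z ^ 2 + - (z * t + 0) ^ 2) by ring.
    rewrite exp_plus; ring. }
  apply (@is_RInt_scal R_NormedModule), (is_RInt_comp_lin gauss z 0 0 1).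
  replace (z * 0 + 0) with 0 by ring; replace (z * 1 + 0) with z by ring.
  apply (RInt_correct (V := R_CompleteNormedModule)), ex_RInt_gauss.
Qed.

Lemma is_derive_gauss_aux (z : R) : is_derive gauss_aux z (- 2 * gauss z * gauss_int z).
Proof. rewrite <- RInt_gauss_aux_deriv; apply is_derive_gauss_aux_RInt. Qed.

Lemma gauss_aux_0 : gauss_aux 0 = PI / 4.
Proof.
  unfold gauss_aux.
  rewrite (RInt_ext _ (fun t => / (1 + t ^ 2))).
  2:{ intros t _; replace (- (0 ^ 2 * (1 + t ^ 2))) with 0 by ring.
      rewrite exp_0; apply Rmult_1_l. }
  rewrite (is_RInt_unique _ _ _ (minus (atan 1) (atan 0))).
  { change (atan 1 - atan 0 = PI / 4); rewrite atan_1, atan_0; ring. }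
  apply (is_RInt_derive atan).
  - intros t _; apply is_derive_Reals, derivable_pt_lim_atan.
  - intros t _; apply ex_derive_continuous_R; auto_derive; nra.
Qed.

(* The classical evaluation of the Gaussian integral: the left-hand side has derivative 0. *)
Lemma gauss_int_sqr_add_aux (z : R) : gauss_int z ^ 2 + gauss_aux z = PI / 4.
Proof.
  set (h := fun z => gauss_int z ^ 2 + gauss_aux z).
  assert (Hh : forall x, is_derive h x 0).
  { intros x; unfold h.
    replace 0 with (INR 2 * gauss x * gauss_int x ^ Init.Nat.pred 2 + - 2 * gauss x * gauss_int x)
      by (simpl; ring).
    apply (is_derive_plus (fun z => gauss_int z ^ 2)).
    - apply (is_derive_pow gauss_int 2), is_derive_gauss_int.
    - apply is_derive_gauss_aux. }
  change (h z = PI / 4); rewrite <- gauss_aux_0.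
  replace (gauss_aux 0) with (h 0) by (unfold h, gauss_int; rewrite RInt_point; change (0 ^ 2 + gauss_aux 0 = gauss_aux 0); ring).
  destruct (MVT_gen h 0 z (fun _ => 0)) as [c [_ Hc]].
  - intros; apply Hh.
  - intros x _; apply (is_derive_continuity_pt _ _ _ (Hh x)).
  - lra.
Qed.

Lemma gauss_aux_bounds (z : R) : 0 <= gauss_aux z <= exp (- z ^ 2).
Proof.
  assert (Hint : ex_RInt (fun t => exp (- (z ^ 2 * (1 + t ^ 2))) / (1 + t ^ 2)) 0 1).
  { apply (ex_RInt_continuous (V := R_CompleteNormedModule)); intros t _.
    apply ex_derive_continuous_R; auto_derive; nra. }
  unfold gauss_aux; split.
  - apply RInt_ge_0; [lra | exact Hint |].
    intros t _; apply Rlt_le, Rdiv_lt_0_compat; [apply exp_pos | nra].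
  - replace (exp (- z ^ 2)) with (RInt (fun _ => exp (- z ^ 2)) 0 1)
      by (rewrite RInt_const; change ((1 - 0) * exp (- z ^ 2) = exp (- z ^ 2)); ring).
    apply RInt_le; [lra | exact Hint | apply ex_RInt_const |].
    intros t _.
    assert (exp (- (z ^ 2 * (1 + t ^ 2))) <= exp (- z ^ 2)) by (apply exp_le_exp; nra).
    apply Rle_trans with (exp (- (z ^ 2 * (1 + t ^ 2)))); [|lra].
    apply Rmult_le_reg_r with (1 + t ^ 2); [nra|].
    unfold Rdiv; rewrite Rmult_assoc, Rinv_l by nra.
    pose proof (exp_pos (- (z ^ 2 * (1 + t ^ 2)))); nra.
Qed.

Lemma sqrt_PI_pos : 0 < sqrt PI.
Proof. apply sqrt_lt_R0, PI_RGT_0. Qed.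

(* [(c - E)(c + E) = gauss_aux z] with [c = sqrt PI / 2] and [E = gauss_int z >= 0]. *)
Lemma gauss_int_tail (z : R) : 0 <= z ->
  Rabs (gauss_int z - sqrt PI / 2) * (sqrt PI / 2) <= exp (- z ^ 2).
Proof.
  intros Hz.
  pose proof (gauss_int_sqr_add_aux z) as Hsum.
  pose proof (gauss_aux_bounds z) as [Ha0 Ha1].
  pose proof (gauss_int_ge_0 z Hz) as HE.
  assert (Hc : (sqrt PI / 2) ^ 2 = PI / 4).
  { replace ((sqrt PI / 2) ^ 2) with (sqrt PI * sqrt PI / 4) by field.
    rewrite sqrt_sqrt; [reflexivity | left; apply PI_RGT_0]. }
  pose proof sqrt_PI_pos.
  set (E := gauss_int z) in *; set (c := sqrt PI / 2) in *.
  apply Rle_trans with (Rabs (E - c) * (E + c)).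
  { apply Rmult_le_compat_l; [apply Rabs_pos | lra]. }
  replace (Rabs (E - c) * (E + c)) with (Rabs ((E - c) * (E + c)))
    by (rewrite Rabs_mult, (Rabs_right (E + c)); [reflexivity | unfold c; lra]).
  replace ((E - c) * (E + c)) with (- gauss_aux z) by nra.
  rewrite Rabs_Ropp, Rabs_right; lra.
Qed.

(** * The standard normal distribution *)

Lemma is_lim_neg_half_sq : is_lim (fun u => - u ^ 2 / 2) m_infty m_infty.
Proof.
  apply (is_lim_le_m_loc (fun u => u)); [|apply is_lim_id].
  exists (-2); intros u Hu; nra.
Qed.

Definition phi (u : R) : R := exp (- u ^ 2 / 2) / sqrt (2 * PI).

Lemma sqrt_2PI_gt_1 : 1 < sqrt (2 * PI).
Proof. rewrite <- sqrt_1; apply sqrt_lt_1; pose proof PI_RGT_0; pose proof PI2_3_2; lra. Qed.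

Lemma phi_pos (u : R) : 0 < phi u.
Proof. apply Rdiv_lt_0_compat; [apply exp_pos | pose proof sqrt_2PI_gt_1; lra]. Qed.

Lemma phi_le_1 (u : R) : phi u <= 1.
Proof.
  pose proof sqrt_2PI_gt_1.
  assert (exp (- u ^ 2 / 2) <= 1) by (rewrite <- exp_0; apply exp_le_exp; nra).
  unfold phi; apply Rmult_le_reg_r with (sqrt (2 * PI)); [lra|].
  unfold Rdiv; rewrite Rmult_assoc, Rinv_l by lra; lra.
Qed.

Lemma is_derive_phi (u : R) : is_derive phi u (- u * phi u).
Proof.
  pose proof sqrt_2PI_gt_1.
  unfold phi; auto_derive; [lra|].
  replace (- (u * (u * 1)) * / 2) with (- u ^ 2 / 2) by field; field; lra.
Qed.

Lemma continuous_phi (u : R) : continuous phi u.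
Proof. exact (is_derive_continuous _ _ _ (is_derive_phi u)). Qed.

Lemma is_lim_phi : is_lim phi m_infty 0.
Proof.
  replace (Finite 0) with (Rbar_mult (/ sqrt (2 * PI)) 0) by (simpl; f_equal; ring).
  apply (is_lim_ext (fun u => / sqrt (2 * PI) * exp (- u ^ 2 / 2))); [intros; unfold phi, Rdiv; ring|].
  apply is_lim_scal_l.
  apply (is_lim_comp exp _ m_infty 0 m_infty is_lim_exp_m is_lim_neg_half_sq).
  exists 0; intros; discriminate.
Qed.

(* With [v = - u^2 / 2]: [u phi u = v e^v * (- 2 / u) / sqrt (2 PI)]. *)
Lemma is_lim_mult_phi : is_lim (fun u => u * phi u) m_infty 0.
Proof.
  pose proof sqrt_2PI_gt_1.
  apply (is_lim_ext_loc (fun u => / sqrt (2 * PI) *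
           ((- u ^ 2 / 2 * exp (- u ^ 2 / 2)) * (- 2 * / u)))).
  { exists 0; intros u Hu; unfold phi; field; lra. }
  replace (Finite 0) with (Rbar_mult (/ sqrt (2 * PI)) (Rbar_mult 0 (Rbar_mult (-2) 0)))
    by (simpl; f_equal; ring).
  apply is_lim_scal_l, is_lim_mult; [| | now simpl].
  - apply (is_lim_comp (fun v => v * exp v) _ m_infty 0 m_infty is_lim_mul_exp_m is_lim_neg_half_sq).
    exists 0; intros; discriminate.
  - apply is_lim_scal_l.
    apply (is_lim_inv (fun u => u) m_infty m_infty); [apply is_lim_id | discriminate].
Qed.

Lemma sqrt_2PI : sqrt (2 * PI) = sqrt 2 * sqrt PI.
Proof. apply sqrt_mult; [lra | left; apply PI_RGT_0]. Qed.

Definition Phi_erf (x : R) : R := 1 / 2 + gauss_int (x / sqrt 2) / sqrt PI.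

Lemma is_derive_Phi_erf (x : R) : is_derive Phi_erf x (phi x).
Proof.
  pose proof sqrt_PI_pos; assert (0 < sqrt 2) by (apply sqrt_lt_R0; lra).
  unfold Phi_erf; auto_derive.
  { exists (gauss (x * / sqrt 2)); apply is_derive_gauss_int. }
  rewrite (is_derive_unique _ _ _ (is_derive_gauss_int _)).
  unfold phi, gauss; rewrite sqrt_2PI.
  replace (- (x * / sqrt 2) ^ 2) with (- x ^ 2 / sqrt 2 ^ 2) by (field; lra).
  rewrite pow2_sqrt by lra; field; lra.
Qed.

Lemma Phi_erf_tail (x : R) : x <= 0 -> Rabs (Phi_erf x) <= 2 * phi x.
Proof.
  intros Hx.
  pose proof sqrt_PI_pos; assert (Hs2 : 0 < sqrt 2) by (apply sqrt_lt_R0; lra).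
  pose proof PI_RGT_0; pose proof PI2_3_2.
  set (z := - x / sqrt 2).
  assert (Hz : 0 <= z) by (unfold z; apply Rdiv_le_0_compat; lra).
  assert (HE : Phi_erf x = - ((gauss_int z - sqrt PI / 2) / sqrt PI)).
  { unfold Phi_erf, z; replace (- x / sqrt 2) with (- (x / sqrt 2)) by (field; lra).
    rewrite gauss_int_opp; field; lra. }
  assert (Hexp : exp (- z ^ 2) = exp (- x ^ 2 / 2)).
  { unfold z; replace (- (- x / sqrt 2) ^ 2) with (- x ^ 2 / sqrt 2 ^ 2) by (field; lra).
    now rewrite pow2_sqrt by lra. }
  pose proof (gauss_int_tail z Hz) as Ht; rewrite Hexp in Ht.
  assert (HPI : sqrt (2 * PI) <= PI).
  { rewrite <- (sqrt_Rsqr PI) at 2 by lra; apply sqrt_le_1_alt; unfold Rsqr; nra. }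
  assert (1 < sqrt (2 * PI)) by apply sqrt_2PI_gt_1.
  rewrite HE, Rabs_Ropp, Rabs_div, (Rabs_right (sqrt PI)) by lra.
  unfold phi; pose proof (exp_pos (- x ^ 2 / 2)).
  apply Rmult_le_reg_r with (sqrt PI / 2 * sqrt PI); [nra|].
  replace (Rabs (gauss_int z - sqrt PI / 2) / sqrt PI * (sqrt PI / 2 * sqrt PI))
    with (Rabs (gauss_int z - sqrt PI / 2) * (sqrt PI / 2)) by (field; lra).
  apply Rle_trans with (exp (- x ^ 2 / 2)); [exact Ht|].
  assert (Hpp : sqrt PI * sqrt PI = PI) by (apply sqrt_sqrt; lra).
  replace (2 * (exp (- x ^ 2 / 2) / sqrt (2 * PI)) * (sqrt PI / 2 * sqrt PI))
    with (exp (- x ^ 2 / 2) * (sqrt PI * sqrt PI / sqrt (2 * PI))) by (field; lra).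
  rewrite Hpp.
  rewrite <- (Rmult_1_r (exp _)) at 1; apply Rmult_le_compat_l; [lra|].
  apply Rmult_le_reg_r with (sqrt (2 * PI)); [lra|].
  unfold Rdiv; rewrite Rmult_assoc, Rinv_l; lra.
Qed.

Lemma is_lim_Phi_erf : is_lim Phi_erf m_infty 0.
Proof.
  apply (is_lim_le_le_loc (fun x => - 2 * phi x) (fun x => 2 * phi x)).
  - exists 0; intros x Hx; replace (- 2 * phi x) with (- (2 * phi x)) by ring.
    apply Rabs_le_between, Phi_erf_tail; lra.
  - replace (Finite 0) with (Rbar_mult (-2) 0) by (simpl; f_equal; ring).
    apply is_lim_scal_l, is_lim_phi.
  - replace (Finite 0) with (Rbar_mult 2 0) by (simpl; f_equal; ring).
    apply is_lim_scal_l, is_lim_phi.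
Qed.

Lemma Phi_eq_Phi_erf (x : R) : Phi x = Phi_erf x.
Proof.
  apply (is_RInt_gen_unique (V := R_CompleteNormedModule)
           (Fa := Rbar_locally m_infty) (Fb := at_point x)).
  replace (Phi_erf x) with (Phi_erf x - 0) by ring.
  apply (is_RInt_gen_ext (Derive Phi_erf)).
  { apply filter_forall; intros ab t _; apply is_derive_unique, is_derive_Phi_erf. }
  apply is_RInt_gen_Derive.
  - apply filter_forall; intros ab t _; exists (phi t); apply is_derive_Phi_erf.
  - apply filter_forall; intros ab t _.
    apply (continuous_ext phi); [intros; symmetry; apply is_derive_unique, is_derive_Phi_erf|].
    apply continuous_phi.
  - exact is_lim_Phi_erf.
  - intros P HP; exact (locally_singleton _ _ HP).
Qed.

Lemma is_derive_Phi (x : R) : is_derive Phi x (phi x).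
Proof.
  apply (is_derive_ext Phi_erf); [intros; symmetry; apply Phi_eq_Phi_erf | apply is_derive_Phi_erf].
Qed.

Lemma is_lim_Phi : is_lim Phi m_infty 0.
Proof. apply (is_lim_ext Phi_erf); [intros; symmetry; apply Phi_eq_Phi_erf | apply is_lim_Phi_erf]. Qed.

Lemma Phi_opp (y : R) : Phi (- y) = 1 - Phi y.
Proof.
  assert (0 < sqrt 2) by (apply sqrt_lt_R0; lra); pose proof sqrt_PI_pos.
  rewrite !Phi_eq_Phi_erf; unfold Phi_erf.
  replace (- y / sqrt 2) with (- (y / sqrt 2)) by (field; lra).
  rewrite gauss_int_opp; field; lra.
Qed.

Lemma Phi_incr (x y : R) : x < y -> Phi x < Phi y.
Proof.
  intros Hxy; apply (incr_function Phi m_infty p_infty phi); simpl; auto.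
  - intros; apply is_derive_Phi.
  - intros; apply phi_pos.
Qed.

Lemma Phi_pos (y : R) : 0 < Phi y.
Proof.
  apply (lim_m_infty_lt_incr Phi Phi p_infty); simpl; auto.
  - intros; now apply Phi_incr.
  - intros; lra.
  - exact is_lim_Phi.
Qed.

Lemma Phi_lt_1 (y : R) : Phi y < 1.
Proof. pose proof (Phi_pos (- y)); rewrite Phi_opp in *; lra. Qed.

Lemma ex_derive_phi (y : R) : ex_derive (fun x => phi x) y.
Proof. eexists; apply is_derive_phi. Qed.

Lemma ex_derive_Phi (y : R) : ex_derive (fun x => Phi x) y.
Proof. eexists; apply is_derive_Phi. Qed.

Lemma Derive_phi (y : R) : Derive (fun x => phi x) y = - y * phi y.
Proof. apply is_derive_unique, is_derive_phi. Qed.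

Lemma Derive_Phi (y : R) : Derive (fun x => Phi x) y = phi y.
Proof. apply is_derive_unique, is_derive_Phi. Qed.

Ltac auto_derive_Phi :=
  auto_derive;
  repeat match goal with
  | |- _ /\ _ => split
  | |- True => exact I
  | |- ex_derive (fun x => phi x) _ => apply ex_derive_phi
  | |- ex_derive (fun x => Phi x) _ => apply ex_derive_Phi
  end;
  rewrite ?Derive_phi, ?Derive_Phi.

(* Mills' inequality: [phi y / (- y) - Phi y] increases on [(-oo, 0)], with derivative
   [phi y / y^2], and vanishes at [-oo]. *)
Lemma Phi_lt_mills (y : R) : y < 0 -> Phi y < phi y / - y.
Proof.
  intros Hy.
  set (gap := fun y => phi y * / - y - Phi y).
  assert (Hd : forall x, x < 0 -> is_derive gap x (phi x / x ^ 2)).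
  { intros x Hx; unfold gap; auto_derive_Phi; [lra | field; lra]. }
  cut (0 < gap y); [unfold gap, Rdiv; lra|].
  apply (lim_m_infty_lt_incr gap gap 0); [| intros; lra | | exact Hy].
  - intros a b Hab Hb; apply (incr_function gap m_infty 0 (fun x => phi x / x ^ 2)); [| | exact I | exact Hab | exact Hb].
    + intros x _ Hx; now apply Hd.
    + intros x _ Hx; apply Rdiv_lt_0_compat; [apply phi_pos | simpl in Hx; nra].
  - apply (is_lim_minus (fun y => phi y * / - y) Phi m_infty (Rbar_mult 0 0) 0 0);
      [| apply is_lim_Phi | simpl; apply (f_equal (fun r => Some (Finite r))); ring].
    apply is_lim_mult; [apply is_lim_phi | | now simpl].
    apply (is_lim_inv (fun x => - x) m_infty p_infty); [|discriminate].
    apply (is_lim_opp (fun x => x) m_infty m_infty), is_lim_id.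
Qed.

(* The lower partial moments [int_{-oo}^y (y - u)^k phi u du] for [k = 1, 2], in closed form. *)
Definition Phi_moment1 (y : R) : R := phi y + y * Phi y.
Definition Phi_moment2 (y : R) : R := Phi y * (1 + y ^ 2) + y * phi y.

Lemma is_derive_Phi_moment1 (y : R) : is_derive Phi_moment1 y (Phi y).
Proof. unfold Phi_moment1; auto_derive_Phi; ring. Qed.

Lemma is_derive_Phi_moment2 (y : R) : is_derive Phi_moment2 y (2 * Phi_moment1 y).
Proof. unfold Phi_moment2, Phi_moment1; auto_derive_Phi; ring. Qed.

Lemma Phi_moment1_pos (y : R) : 0 < Phi_moment1 y.
Proof.
  unfold Phi_moment1; pose proof (phi_pos y); pose proof (Phi_pos y).
  destruct (Rlt_or_le y 0) as [Hy|Hy]; [|nra].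
  pose proof (Phi_lt_mills y Hy).
  assert (phi y / - y * - y = phi y) by (field; lra).
  nra.
Qed.

Lemma Phi_moment2_pos (y : R) : 0 < Phi_moment2 y.
Proof.
  apply (lim_m_infty_lt_incr Phi_moment2 (fun y => y * phi y) p_infty); [| | exact is_lim_mult_phi | exact I].
  - intros a b Hab _.
    apply (incr_function Phi_moment2 m_infty p_infty (fun y => 2 * Phi_moment1 y)); try exact I; auto.
    + intros; apply is_derive_Phi_moment2.
    + intros x _ _; pose proof (Phi_moment1_pos x); lra.
  - intros x _; unfold Phi_moment2; pose proof (Phi_pos x); nra.
Qed.

(** * The nonlinearity [A_l] *)

Section Nonlinearity.

Variable l : R.
Hypothesis hl : 0 < l.

Definition A_pos (x : R) : R :=
  2 * l ^ 2 * ((1 - 2 * x) * exp (l ^ 2 * (x - 1)) * Phi (l * (1 - 2 * x) / sqrt (2 * x))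
               + Phi (- l / sqrt (2 * x))).

Lemma A_eq_A_pos (x : R) : 0 < x -> A_ l x = A_pos x.
Proof. intros Hx; unfold A_, Gamma_, D_, A_pos; destruct (Rle_dec x 0); [lra | ring]. Qed.

Lemma A_nonpos (x : R) : x <= 0 -> A_ l x = 2 * l ^ 2 * exp (- l ^ 2).
Proof. intros Hx; unfold A_; destruct (Rle_dec x 0); [reflexivity | lra]. Qed.

Lemma A_Rmax_0 (x : R) : A_ l x = A_ l (Rmax x 0).
Proof.
  unfold Rmax; destruct (Rle_dec x 0); [rewrite !A_nonpos by lra|]; reflexivity.
Qed.

Definition A_pos_deriv (x : R) : R :=
  2 * l ^ 2 * exp (l ^ 2 * (x - 1)) * Phi (l * (1 - 2 * x) / sqrt (2 * x)) * (l ^ 2 - 2 - 2 * x * l ^ 2)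
  + 2 * l ^ 3 * sqrt (2 * x) * phi (- l / sqrt (2 * x)).

Lemma phi_shift (x : R) : 0 < x ->
  phi (l * (1 - 2 * x) / sqrt (2 * x)) = phi (- l / sqrt (2 * x)) / exp (l ^ 2 * (x - 1)).
Proof.
  intros Hx; pose proof sqrt_2PI_gt_1.
  assert (Hs : 0 < sqrt (2 * x)) by (apply sqrt_lt_R0; lra).
  assert (Hss : sqrt (2 * x) * sqrt (2 * x) = 2 * x) by (apply sqrt_sqrt; lra).
  assert (Hexp : - (- l / sqrt (2 * x)) ^ 2 / 2
                 = - (l * (1 - 2 * x) / sqrt (2 * x)) ^ 2 / 2 + l ^ 2 * (x - 1)).
  { set (s := sqrt (2 * x)) in *; clearbody s.
    replace x with (s * s / 2) by lra; field; lra. }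
  unfold phi; rewrite Hexp, exp_plus.
  field; split; [lra | apply Rgt_not_eq, exp_pos].
Qed.

Lemma is_derive_A_pos (x : R) : 0 < x -> is_derive A_pos x (A_pos_deriv x).
Proof.
  intros Hx.
  assert (Hs : 0 < sqrt (2 * x)) by (apply sqrt_lt_R0; lra).
  assert (Hss : sqrt (2 * x) * sqrt (2 * x) = 2 * x) by (apply sqrt_sqrt; lra).
  unfold A_pos; auto_derive_Phi; try lra.
  change (l * (1 + - (2 * x)) * / sqrt (2 * x)) with (l * (1 - 2 * x) / sqrt (2 * x)).
  change (- l * / sqrt (2 * x)) with (- l / sqrt (2 * x)).
  rewrite (phi_shift x Hx).
  replace (l * (l * 1) * (x + - (1))) with (l ^ 2 * (x - 1)) by ring.
  unfold A_pos_deriv.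
  pose proof (exp_pos (l ^ 2 * (x - 1))).
  set (E := exp (l ^ 2 * (x - 1))) in *.
  set (Pa := Phi (l * (1 - 2 * x) / sqrt (2 * x))).
  set (pb := phi (- l / sqrt (2 * x))).
  set (s := sqrt (2 * x)) in *; clearbody s E Pa pb.
  replace x with (s * s / 2) by lra; field; lra.
Qed.

Lemma is_derive_A (x : R) : 0 < x -> is_derive (A_ l) x (A_pos_deriv x).
Proof.
  intros Hx; apply (is_derive_ext_loc A_pos); [|now apply is_derive_A_pos].
  apply (filter_imp (fun y => 0 < y)); [intros; symmetry; now apply A_eq_A_pos|].
  now apply open_gt.
Qed.

Definition mills_K (b c : R) : R := c * Phi (b * c) * exp (b ^ 2 * c ^ 2 / 2).

Lemma is_derive_mills_K (b c : R) :
  is_derive (mills_K b) c (exp (b ^ 2 * c ^ 2 / 2) * Phi_moment2 (b * c)).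
Proof.
  unfold mills_K, Phi_moment2; auto_derive_Phi.
  replace (b * (b * 1) * (c * (c * 1)) * / 2) with (b ^ 2 * c ^ 2 / 2) by field; field.
Qed.

Lemma mills_K_incr (b c1 c2 : R) : c1 < c2 -> mills_K b c1 < mills_K b c2.
Proof.
  intros Hc; apply (incr_function (mills_K b) m_infty p_infty
                      (fun c => exp (b ^ 2 * c ^ 2 / 2) * Phi_moment2 (b * c))); try exact I; auto.
  - intros; apply is_derive_mills_K.
  - intros; apply Rmult_lt_0_compat; [apply exp_pos | apply Phi_moment2_pos].
Qed.

(* With [b = - l / sqrt (2 x)]: [b (2 x - 1) = l (1 - 2 x) / sqrt (2 x)] and
   [b^2 (2 x - 1)^2 / 2 = l^2 (x - 1) + b^2 / 2]. *)
Lemma A_pos_mills_K (x : R) : 0 < x ->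
  A_pos x = 2 * l ^ 2 * exp (- (- l / sqrt (2 * x)) ^ 2 / 2) *
            (mills_K (- l / sqrt (2 * x)) 1 - mills_K (- l / sqrt (2 * x)) (2 * x - 1)).
Proof.
  intros Hx; unfold A_pos, mills_K.
  assert (Hs : 0 < sqrt (2 * x)) by (apply sqrt_lt_R0; lra).
  assert (Hss : sqrt (2 * x) * sqrt (2 * x) = 2 * x) by (apply sqrt_sqrt; lra).
  set (b := - l / sqrt (2 * x)).
  assert (E1 : b * (2 * x - 1) = l * (1 - 2 * x) / sqrt (2 * x)) by (unfold b; field; lra).
  assert (E2 : b ^ 2 * (2 * x - 1) ^ 2 / 2 = l ^ 2 * (x - 1) + b ^ 2 / 2).
  { unfold b; set (s := sqrt (2 * x)) in *; clearbody s.
    replace x with (s * s / 2) by lra; field; lra. }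
  rewrite E1, E2, exp_plus, Rmult_1_r.
  replace (b ^ 2 * 1 ^ 2 / 2) with (b ^ 2 / 2) by field.
  replace (- b ^ 2 / 2) with (- (b ^ 2 / 2)) by field; rewrite exp_Ropp.
  pose proof (exp_pos (b ^ 2 / 2)); field; lra.
Qed.

Lemma A_gt_0 (x : R) : x < 1 -> 0 < A_ l x.
Proof.
  intros Hx; pose proof (pow_lt l 2 hl).
  destruct (Rle_or_lt x 0) as [H0|H0].
  - rewrite A_nonpos by auto; pose proof (exp_pos (- l ^ 2)); nra.
  - rewrite A_eq_A_pos, A_pos_mills_K by auto.
    pose proof (mills_K_incr (- l / sqrt (2 * x)) (2 * x - 1) 1 ltac:(lra)).
    pose proof (exp_pos (- (- l / sqrt (2 * x)) ^ 2 / 2)).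
    apply Rmult_lt_0_compat; [nra | lra].
Qed.

Lemma A_lt_0 (x : R) : 1 < x -> A_ l x < 0.
Proof.
  intros Hx; pose proof (pow_lt l 2 hl).
  rewrite A_eq_A_pos, A_pos_mills_K by lra.
  pose proof (mills_K_incr (- l / sqrt (2 * x)) 1 (2 * x - 1) ltac:(lra)).
  pose proof (exp_pos (- (- l / sqrt (2 * x)) ^ 2 / 2)).
  assert (0 < 2 * l ^ 2 * exp (- (- l / sqrt (2 * x)) ^ 2 / 2)) by nra.
  nra.
Qed.

Lemma A_1 : A_ l 1 = 0.
Proof. rewrite A_eq_A_pos, A_pos_mills_K by lra; replace (2 * 1 - 1) with 1 by ring; ring. Qed.

Definition A_weight (x : R) : R := (1 - 2 * x) * exp (l ^ 2 * (x - 1)).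

(* Both Phi-terms of [A_pos] are within [sqrt (2 x) / l]-order of their limits 1 and 0, by
   Mills' inequality. *)
Lemma A_near_0 (x : R) : 0 < x < 1 / 4 ->
  Rabs (A_ l x - A_ l 0) <= 6 * l * sqrt (2 * x) + 2 * l ^ 2 * Rabs (A_weight x - A_weight 0).
Proof.
  intros Hx; pose proof (pow_lt l 2 hl).
  rewrite A_eq_A_pos, A_nonpos by lra; unfold A_pos.
  replace (exp (- l ^ 2)) with (A_weight 0) by (unfold A_weight; replace (l ^ 2 * (0 - 1)) with (- l ^ 2) by ring; ring).
  change ((1 - 2 * x) * exp (l ^ 2 * (x - 1))) with (A_weight x).
  assert (Hg : 0 < A_weight x <= 1).
  { unfold A_weight; pose proof (exp_pos (l ^ 2 * (x - 1))).
    assert (exp (l ^ 2 * (x - 1)) <= 1) by (rewrite <- exp_0 at 2; apply exp_le_exp; nra).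
    split; nra. }
  set (s := sqrt (2 * x)); assert (Hs : 0 < s) by (apply sqrt_lt_R0; lra).
  set (a := l * (1 - 2 * x) / s); set (b := - l / s).
  assert (Ha : 0 < a) by (unfold a; apply Rdiv_lt_0_compat; nra).
  assert (Hb : b < 0).
  { assert (0 < l / s) by (apply Rdiv_lt_0_compat; lra).
    unfold b; replace (- l / s) with (- (l / s)) by (field; lra); lra. }
  assert (HPa : 1 - Phi a <= 2 * s / l).
  { rewrite <- Phi_opp; left; eapply Rlt_le_trans; [apply Phi_lt_mills; lra|].
    pose proof (phi_le_1 (- a)); rewrite Ropp_involutive.
    apply Rle_trans with (1 / a); [unfold Rdiv; apply Rmult_le_compat_r; [left; apply Rinv_0_lt_compat|]; lra|].
    unfold a; apply Rmult_le_reg_r with (l * (1 - 2 * x)); [nra|].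
    replace (1 / (l * (1 - 2 * x) / s) * (l * (1 - 2 * x))) with s by (field; lra).
    replace (2 * s / l * (l * (1 - 2 * x))) with (2 * s * (1 - 2 * x)) by (field; lra); nra. }
  assert (HPb : Phi b <= s / l).
  { left; eapply Rlt_le_trans; [apply Phi_lt_mills; lra|].
    pose proof (phi_le_1 b).
    replace (s / l) with (1 / - b) by (unfold b; field; lra).
    unfold Rdiv; apply Rmult_le_compat_r; [left; apply Rinv_0_lt_compat|]; lra. }
  pose proof (Phi_pos a); pose proof (Phi_lt_1 a); pose proof (Phi_pos b).
  set (G := A_weight x) in *; set (G0 := A_weight 0) in *.
  replace (2 * l ^ 2 * (G * Phi a + Phi b) - 2 * l ^ 2 * G0)
    with (2 * l ^ 2 * (- (G * (1 - Phi a)) + (G - G0) + Phi b)) by ring.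
  rewrite Rabs_mult, (Rabs_right (2 * l ^ 2)) by lra.
  apply Rle_trans with (2 * l ^ 2 * (3 * s / l + Rabs (G - G0))); [|right; field; lra].
  apply Rmult_le_compat_l; [lra|].
  eapply Rle_trans; [apply Rabs_triang|]; rewrite (Rabs_right (Phi b)) by lra.
  eapply Rle_trans; [apply Rplus_le_compat_r, Rabs_triang|].
  rewrite Rabs_Ropp, Rabs_mult, (Rabs_right G), (Rabs_right (1 - Phi a)) by lra.
  assert (G * (1 - Phi a) <= 1 - Phi a) by nra; lra.
Qed.

Lemma continuity_pt_A_0 : continuity_pt (A_ l) 0.
Proof.
  pose proof (pow_lt l 2 hl).
  assert (Hg : continuity_pt A_weight 0).
  { apply (is_derive_continuity_pt _ _ (Derive A_weight 0)); unfold A_weight.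
    apply Derive_correct; auto_derive; auto. }
  intros eps He.
  destruct (Hg (eps / (4 * l ^ 2))) as [alp [Halp Hgalp]]; [apply Rdiv_lt_0_compat; lra|].
  set (r := eps / (12 * l)); assert (Hr : 0 < r) by (apply Rdiv_lt_0_compat; lra).
  exists (Rmin (Rmin alp (r ^ 2 / 2)) (1 / 4)); split.
  { repeat apply Rmin_pos; nra. }
  intros x [_ Hx]; change (Rabs (x - 0) < Rmin (Rmin alp (r ^ 2 / 2)) (1 / 4)) in Hx.
  change (Rabs (A_ l x - A_ l 0) < eps); rewrite Rminus_0_r in Hx.
  pose proof (Rmin_l (Rmin alp (r ^ 2 / 2)) (1 / 4)); pose proof (Rmin_r (Rmin alp (r ^ 2 / 2)) (1 / 4)).
  pose proof (Rmin_l alp (r ^ 2 / 2)); pose proof (Rmin_r alp (r ^ 2 / 2)).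
  apply Rabs_def2 in Hx as [Hx1 Hx2].
  destruct (Rle_or_lt x 0) as [Hx0|Hx0].
  { rewrite !A_nonpos by lra; unfold Rminus; rewrite Rplus_opp_r, Rabs_R0; lra. }
  eapply Rle_lt_trans; [apply A_near_0; lra|].
  assert (Hgx : Rabs (A_weight x - A_weight 0) < eps / (4 * l ^ 2)).
  { apply Hgalp; split; [split; [exact I | lra]|].
    change (Rabs (x - 0) < alp); rewrite Rminus_0_r, Rabs_right; lra. }
  assert (Hsq : sqrt (2 * x) < r).
  { rewrite <- (sqrt_pow2 r) by lra; apply sqrt_lt_1_alt; lra. }
  assert (6 * l * sqrt (2 * x) < eps / 2).
  { apply Rlt_le_trans with (6 * l * r); [apply Rmult_lt_compat_l; lra | unfold r; right; field; lra]. }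
  assert (2 * l ^ 2 * Rabs (A_weight x - A_weight 0) < eps / 2).
  { apply Rlt_le_trans with (2 * l ^ 2 * (eps / (4 * l ^ 2)));
      [apply Rmult_lt_compat_l; lra | right; field; lra]. }
  lra.
Qed.

Lemma continuity_pt_A (x : R) : continuity_pt (A_ l) x.
Proof.
  destruct (Rtotal_order x 0) as [Hx|[->|Hx]].
  - apply continuity_pt_filterlim, (continuous_ext_loc _ (fun _ => 2 * l ^ 2 * exp (- l ^ 2)));
      [|apply continuous_const].
    apply (filter_imp (fun y => y < 0)); [intros; symmetry; apply A_nonpos; lra|].
    now apply open_lt.
  - exact continuity_pt_A_0.
  - exact (is_derive_continuity_pt _ _ _ (is_derive_A x Hx)).
Qed.

Lemma A_pos_deriv_bound (K : R) : 0 < K ->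
  exists C, 0 < C /\ forall c, 0 <= c <= K -> Rabs (A_pos_deriv c) <= C.
Proof.
  intros HK; pose proof (pow_lt l 2 hl); pose proof (pow_lt l 3 hl).
  set (EK := exp (l ^ 2 * (K - 1))); set (Q := l ^ 2 + 2 + 2 * K * l ^ 2).
  pose proof (exp_pos (l ^ 2 * (K - 1))); pose proof (sqrt_pos (2 * K)).
  exists (2 * l ^ 2 * EK * Q + 2 * l ^ 3 * sqrt (2 * K) + 1); split.
  { assert (0 <= 2 * l ^ 2 * EK * Q) by (unfold EK, Q; apply Rmult_le_pos; nra); nra. }
  intros c Hc; unfold A_pos_deriv.
  set (E := exp (l ^ 2 * (c - 1))); set (Pa := Phi (l * (1 - 2 * c) / sqrt (2 * c))).
  set (pb := phi (- l / sqrt (2 * c))); set (q := l ^ 2 - 2 - 2 * c * l ^ 2).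
  assert (HE : 0 < E <= EK) by (split; [apply exp_pos | apply exp_le_exp; nra]).
  assert (HPa : 0 < Pa < 1) by (split; [apply Phi_pos | apply Phi_lt_1]).
  assert (Hpb : 0 < pb <= 1) by (split; [apply phi_pos | apply phi_le_1]).
  assert (Hs : 0 <= sqrt (2 * c) <= sqrt (2 * K)) by (split; [apply sqrt_pos | apply sqrt_le_1_alt; lra]).
  assert (Hq : Rabs q <= Q) by (apply Rabs_le; unfold q, Q; nra).
  assert (Hfirst : Rabs (2 * l ^ 2 * E * Pa * q) <= 2 * l ^ 2 * EK * Q).
  { rewrite Rabs_mult, (Rabs_right (2 * l ^ 2 * E * Pa))
      by (apply Rle_ge, Rmult_le_pos; [apply Rmult_le_pos|]; lra).
    assert (E * Pa <= EK) by nra; assert (0 <= E * Pa) by nra.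
    assert (E * Pa * Rabs q <= EK * Q) by (pose proof (Rabs_pos q); nra).
    replace (2 * l ^ 2 * E * Pa * Rabs q) with (2 * l ^ 2 * (E * Pa * Rabs q)) by ring.
    replace (2 * l ^ 2 * EK * Q) with (2 * l ^ 2 * (EK * Q)) by ring.
    apply Rmult_le_compat_l; lra. }
  assert (Hsecond : Rabs (2 * l ^ 3 * sqrt (2 * c) * pb) <= 2 * l ^ 3 * sqrt (2 * K)).
  { rewrite Rabs_right by (apply Rle_ge, Rmult_le_pos; [apply Rmult_le_pos|]; lra).
    assert (sqrt (2 * c) * pb <= sqrt (2 * K)) by nra.
    rewrite Rmult_assoc; apply Rmult_le_compat_l; lra. }
  eapply Rle_trans; [apply Rabs_triang | lra].
Qed.

Lemma A_locally_lipschitz (K : R) : 0 < K -> exists L, 0 < L /\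
  forall x y, x <= K -> y <= K -> Rabs (A_ l x - A_ l y) <= L * Rabs (x - y).
Proof.
  intros HK; destruct (A_pos_deriv_bound K HK) as [C [HC Hb]].
  exists C; split; [exact HC|].
  assert (Hmvt : forall x y, 0 <= x <= y -> y <= K -> Rabs (A_ l x - A_ l y) <= C * Rabs (x - y)).
  { intros x y Hxy HyK; destruct (Req_dec x y) as [->|Hne].
    { unfold Rminus; rewrite !Rplus_opp_r, Rabs_R0; lra. }
    destruct (MVT_gen (A_ l) x y A_pos_deriv) as [c [Hc E]].
    - intros t Ht; rewrite Rmin_left, Rmax_right in Ht by lra; apply is_derive_A; lra.
    - intros t _; apply continuity_pt_A.
    - rewrite Rmin_left, Rmax_right in Hc by lra.
      rewrite Rabs_minus_sym, E, Rabs_mult, (Rabs_minus_sym x y).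
      apply Rmult_le_compat_r; [apply Rabs_pos | apply Hb; lra]. }
  intros x y Hx Hy; rewrite (A_Rmax_0 x), (A_Rmax_0 y).
  assert (Rabs (Rmax x 0 - Rmax y 0) <= Rabs (x - y)).
  { unfold Rmax; destruct (Rle_dec x 0), (Rle_dec y 0); unfold Rabs; repeat destruct Rcase_abs; lra. }
  assert (0 <= Rmax x 0 <= K) by (split; [apply Rmax_r | apply Rmax_lub; lra]).
  assert (0 <= Rmax y 0 <= K) by (split; [apply Rmax_r | apply Rmax_lub; lra]).
  eapply Rle_trans; [|apply Rmult_le_compat_l; [lra | eassumption]].
  destruct (Rle_or_lt (Rmax x 0) (Rmax y 0)).
  - apply Hmvt; lra.
  - rewrite Rabs_minus_sym, (Rabs_minus_sym (Rmax x 0)); apply Hmvt; lra.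
Qed.

End Nonlinearity.

(** * Separation of variables *)

(* Solutions of [y' = G y] from [y0 < 1], where [G > 0] below the equilibrium 1, obtained by
   inverting [t(y) = int_{y0}^y dz / G z]. The bound [G z <= L (1 - z)] makes [t] unbounded,
   so the solution exists for all [t >= 0] and tends to 1. *)
Section Separation.

Variables (G : R -> R) (y0 L : R).
Hypothesis G_cont : forall z, continuity_pt G z.
Hypothesis G_pos : forall z, z < 1 -> 0 < G z.
Hypothesis L_pos : 0 < L.
Hypothesis y0_lt_1 : y0 < 1.
Hypothesis G_le_linear : forall z, y0 <= z <= 1 -> G z <= L * (1 - z).

Definition travel_time (y : R) : R := RInt (fun z => / G z) y0 y.

Lemma continuous_inv_G (z : R) : z < 1 -> continuous (fun z => / G z) z.
Proof.
  intros Hz; apply continuity_pt_filterlim, (continuity_pt_inv G z (G_cont z)).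
  pose proof (G_pos z Hz); lra.
Qed.

Lemma ex_RInt_inv_G (u v : R) : u < 1 -> v < 1 -> ex_RInt (fun z => / G z) u v.
Proof.
  intros Hu Hv; apply (ex_RInt_continuous (V := R_CompleteNormedModule)); intros z Hz.
  apply continuous_inv_G; pose proof (Rmax_lub_lt u v 1 Hu Hv); lra.
Qed.

Lemma is_derive_travel_time (y : R) : y < 1 -> is_derive travel_time y (/ G y).
Proof.
  intros Hy; apply (is_derive_RInt (fun z => / G z) travel_time y0 y); [|now apply continuous_inv_G].
  apply (filter_imp (fun b => b < 1)); [|now apply open_lt].
  intros b Hb; exact (RInt_correct (V := R_CompleteNormedModule) _ _ _ (ex_RInt_inv_G y0 b y0_lt_1 Hb)).
Qed.

Lemma travel_time_y0 : travel_time y0 = 0.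
Proof. unfold travel_time; rewrite RInt_point; reflexivity. Qed.

Lemma G_bounded : exists M, 0 < M /\ forall z, y0 - 1 <= z <= 1 -> G z <= M.
Proof.
  destruct (continuity_ab_maj G (y0 - 1) 1) as [zM [HzM _]]; [lra | intros; apply G_cont|].
  exists (G zM); split; [|auto].
  pose proof (HzM (y0 - 1) ltac:(lra)); pose proof (G_pos (y0 - 1) ltac:(lra)); lra.
Qed.

Lemma travel_time_sub (u v : R) : u < 1 -> v < 1 ->
  travel_time v - travel_time u = RInt (fun z => / G z) u v.
Proof.
  intros Hu Hv; unfold travel_time.
  rewrite <- (RInt_Chasles (V := R_CompleteNormedModule) _ y0 u v)
    by (apply ex_RInt_inv_G; lra).
  change (RInt (fun z => / G z) y0 u + RInt (fun z => / G z) u v - RInt (fun z => / G z) y0 u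
          = RInt (fun z => / G z) u v); ring.
Qed.

Lemma travel_time_lower (M : R) : 0 < M -> (forall z, y0 - 1 <= z <= 1 -> G z <= M) ->
  forall u v, y0 - 1 <= u <= v -> v < 1 -> (v - u) / M <= travel_time v - travel_time u.
Proof.
  intros HM HGM u v Huv Hv; rewrite travel_time_sub by lra.
  replace ((v - u) / M) with (RInt (fun _ => / M) u v)
    by (rewrite RInt_const; change ((v - u) * / M = (v - u) / M); reflexivity).
  apply RInt_le; [lra | apply ex_RInt_const | apply ex_RInt_inv_G; lra |].
  intros z Hz; apply Rinv_le_contravar; [apply G_pos; lra | apply HGM; lra].
Qed.

Lemma travel_time_incr (u v : R) : y0 - 1 <= u -> u < v -> v < 1 -> travel_time u < travel_time v.
Proof.
  intros Hu Huv Hv; destruct G_bounded as [M [HM HGM]].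
  pose proof (travel_time_lower M HM HGM u v ltac:(lra) Hv).
  assert (0 < (v - u) / M) by (apply Rdiv_lt_0_compat; lra); lra.
Qed.

Lemma travel_time_ge_log (y : R) : y0 <= y < 1 ->
  (ln (1 - y0) - ln (1 - y)) / L <= travel_time y.
Proof.
  intros Hy; destruct (Req_dec y0 y) as [<-|Hne].
  { rewrite travel_time_y0; unfold Rminus; rewrite Rplus_opp_r; unfold Rdiv; lra. }
  assert (HI : is_RInt (fun z => / (L * (1 - z))) y0 y
                 (minus (- ln (1 - y) / L) (- ln (1 - y0) / L))).
  { apply (is_RInt_derive (fun z => - ln (1 - z) / L)); intros z Hz;
      rewrite Rmin_left, Rmax_right in Hz by lra.
    - auto_derive; [lra | field; lra].
    - apply ex_derive_continuous_R; auto_derive; pose proof (Rmult_lt_0_compat L (1 - z)); lra. }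
  replace ((ln (1 - y0) - ln (1 - y)) / L) with (minus (- ln (1 - y) / L) (- ln (1 - y0) / L))
    by (change (- ln (1 - y) / L + - (- ln (1 - y0) / L) = (ln (1 - y0) - ln (1 - y)) / L); field; lra).
  rewrite <- (is_RInt_unique _ _ _ _ HI).
  apply RInt_le; [lra | eexists; exact HI | apply ex_RInt_inv_G; lra |].
  intros z Hz; apply Rinv_le_contravar; [apply G_pos; lra | apply G_le_linear; lra].
Qed.

Lemma travel_time_unbounded (t : R) : exists y, y0 <= y < 1 /\ t < travel_time y.
Proof.
  set (T := Rmax t 0 + 1); assert (HT : 0 < T) by (unfold T; pose proof (Rmax_r t 0); lra).
  set (y := 1 - (1 - y0) * exp (- (L * T))).
  pose proof (exp_pos (- (L * T))).
  assert (exp (- (L * T)) < 1) by (rewrite <- exp_0; apply exp_increasing; nra).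
  exists y; split; [unfold y; split; nra|].
  eapply Rlt_le_trans; [|apply travel_time_ge_log; unfold y; split; nra].
  replace (1 - y) with ((1 - y0) * exp (- (L * T))) by (unfold y; ring).
  rewrite ln_mult, ln_exp by lra.
  replace ((ln (1 - y0) - (ln (1 - y0) + - (L * T))) / L) with T by (field; lra).
  unfold T; pose proof (Rmax_l t 0); lra.
Qed.

Lemma travel_time_below_lt_0 : travel_time (y0 - 1) < 0.
Proof. rewrite <- travel_time_y0; apply travel_time_incr; lra. Qed.

Lemma travel_time_surj (t : R) : travel_time (y0 - 1) < t ->
  exists y, y0 - 1 < y < 1 /\ travel_time y = t.
Proof.
  intros Ht; destruct (travel_time_unbounded t) as [yb [Hyb Hbt]].
  destruct (IVT_interv (fun y => travel_time y - t) (y0 - 1) yb) as [z [Hz Ez]]; try lra.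
  - intros a Ha; apply continuity_pt_minus; [|apply continuity_pt_const; intros ? ?; reflexivity].
    apply (is_derive_continuity_pt _ _ _ (is_derive_travel_time a ltac:(lra))).
  - exists z; split; [|lra].
    destruct (Req_dec z (y0 - 1)) as [->|]; lra.
Qed.

Definition separated_solution (t : R) : R :=
  epsilon (inhabits 0) (fun y => y0 - 1 < y < 1 /\ travel_time y = t).

Lemma separated_solution_spec (t : R) : travel_time (y0 - 1) < t ->
  y0 - 1 < separated_solution t < 1 /\ travel_time (separated_solution t) = t.
Proof. intros Ht; unfold separated_solution; apply epsilon_spec, travel_time_surj, Ht. Qed.

Lemma separated_solution_travel_time (y : R) : y0 - 1 < y < 1 ->
  separated_solution (travel_time y) = y.
Proof.
  intros Hy.
  assert (Ht : travel_time (y0 - 1) < travel_time y) by (apply travel_time_incr; lra).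
  destruct (separated_solution_spec _ Ht) as [[Hs1 Hs2] Hts].
  destruct (Rtotal_order (separated_solution (travel_time y)) y) as [Hlt|[Heq|Hgt]]; auto.
  - pose proof (travel_time_incr (separated_solution (travel_time y)) y ltac:(lra) Hlt ltac:(lra)); lra.
  - pose proof (travel_time_incr y (separated_solution (travel_time y)) ltac:(lra) Hgt ltac:(lra)); lra.
Qed.

Lemma separated_solution_0 : separated_solution 0 = y0.
Proof. rewrite <- travel_time_y0; apply separated_solution_travel_time; lra. Qed.

Lemma separated_solution_le (t1 t2 : R) : travel_time (y0 - 1) < t1 -> t1 <= t2 ->
  separated_solution t1 <= separated_solution t2.
Proof.
  intros H1 H12.
  destruct (separated_solution_spec t1 H1) as [A1 B1].
  destruct (separated_solution_spec t2 ltac:(lra)) as [A2 B2].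
  apply Rnot_lt_le; intros Hlt.
  pose proof (travel_time_incr (separated_solution t2) (separated_solution t1) ltac:(lra) Hlt ltac:(lra));
    lra.
Qed.

Lemma separated_solution_lipschitz : exists M, 0 < M /\
  forall t1 t2, travel_time (y0 - 1) < t1 -> t1 <= t2 ->
  separated_solution t2 - separated_solution t1 <= M * (t2 - t1).
Proof.
  destruct G_bounded as [M [HM HGM]]; exists M; split; [exact HM|].
  intros t1 t2 H1 H12.
  destruct (separated_solution_spec t1 H1) as [A1 B1].
  destruct (separated_solution_spec t2 ltac:(lra)) as [A2 B2].
  pose proof (separated_solution_le t1 t2 H1 H12).
  pose proof (travel_time_lower M HM HGM (separated_solution t1) (separated_solution t2)
                ltac:(lra) ltac:(lra)) as Hlow.
  rewrite B1, B2 in Hlow.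
  apply Rmult_le_reg_r with (/ M); [now apply Rinv_0_lt_compat|].
  replace (M * (t2 - t1) * / M) with (t2 - t1) by (field; lra); exact Hlow.
Qed.

Lemma continuity_pt_separated_solution (t : R) : travel_time (y0 - 1) < t ->
  continuity_pt separated_solution t.
Proof.
  intros Ht; destruct separated_solution_lipschitz as [M [HM Hlip]].
  intros eps He.
  exists (Rmin (t - travel_time (y0 - 1)) (eps / M)); split.
  { apply Rmin_pos; [lra | apply Rdiv_lt_0_compat; lra]. }
  intros x [_ Hx]; change (Rabs (x - t) < Rmin (t - travel_time (y0 - 1)) (eps / M)) in Hx.
  change (Rabs (separated_solution x - separated_solution t) < eps).
  pose proof (Rmin_l (t - travel_time (y0 - 1)) (eps / M)).
  pose proof (Rmin_r (t - travel_time (y0 - 1)) (eps / M)).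
  apply Rabs_def2 in Hx as [Hx1 Hx2].
  assert (HMe : M * (eps / M) = eps) by (field; lra).
  destruct (Rle_or_lt x t) as [Hxt|Htx].
  - pose proof (Hlip x t ltac:(lra) Hxt); pose proof (separated_solution_le x t ltac:(lra) Hxt).
    rewrite Rabs_minus_sym, Rabs_right by lra.
    assert (M * (t - x) < M * (eps / M)) by (apply Rmult_lt_compat_l; lra); lra.
  - pose proof (Hlip t x Ht ltac:(lra)); pose proof (separated_solution_le t x Ht ltac:(lra)).
    rewrite Rabs_right by lra.
    assert (M * (x - t) < M * (eps / M)) by (apply Rmult_lt_compat_l; lra); lra.
Qed.

Lemma is_derive_separated_solution (t : R) : travel_time (y0 - 1) < t ->
  derivable_pt_lim separated_solution t (G (separated_solution t)).
Proof.
  intros Ht.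
  set (lb := (travel_time (y0 - 1) + t) / 2); set (ub := t + 1).
  assert (Hlb : travel_time (y0 - 1) < lb) by (unfold lb; lra).
  destruct (separated_solution_spec ub ltac:(unfold ub; lra)) as [Aub _].
  destruct (separated_solution_spec t Ht) as [At _].
  assert (Hder : forall a, separated_solution lb <= a <= separated_solution ub ->
                           derivable_pt travel_time a).
  { intros a Ha; exists (/ G a); apply is_derive_Reals, is_derive_travel_time; lra. }
  assert (Hin : separated_solution lb <= separated_solution t <= separated_solution ub)
    by (split; apply separated_solution_le; unfold lb, ub in *; lra).
  pose proof (derivable_pt_lim_recip_interv travel_time separated_solution lb ub t Hder
                (continuity_pt_separated_solution t Ht) ltac:(unfold lb, ub; lra)
                ltac:(unfold lb, ub; lra) Hin) as Hrecip.
  assert (Hd : derive_pt travel_time (separated_solution t) (Hder _ Hin) = / G (separated_solution t))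
    by (apply derive_pt_eq_0, is_derive_Reals, is_derive_travel_time; lra).
  rewrite Hd in Hrecip.
  pose proof (G_pos (separated_solution t) ltac:(lra)).
  replace (G (separated_solution t)) with (1 / / G (separated_solution t)) by (field; lra).
  apply Hrecip.
  - intros x [Hx _]; unfold comp, id; apply separated_solution_spec; unfold lb in *; lra.
  - apply Rinv_neq_0_compat; lra.
Qed.

Lemma is_lim_separated_solution : is_lim separated_solution p_infty 1.
Proof.
  apply is_lim_spec; intros [eps He]; simpl.
  assert (Hclose : exists T, forall t, T < t -> 1 - eps < separated_solution t < 1).
  { pose proof travel_time_below_lt_0.
    destruct (Rlt_or_le (1 - eps / 2) y0) as [Hs|Hs].
    - exists 0; intros t Ht.
      pose proof (separated_solution_le 0 t ltac:(lra) ltac:(lra)); rewrite separated_solution_0 in *.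
      pose proof (separated_solution_spec t ltac:(lra)); lra.
    - set (ys := 1 - eps / 2); exists (travel_time ys); intros t Ht.
      assert (Hys : travel_time (y0 - 1) < travel_time ys) by (apply travel_time_incr; unfold ys in *; lra).
      pose proof (separated_solution_le _ t Hys ltac:(lra)).
      rewrite separated_solution_travel_time in * by (unfold ys in *; lra).
      pose proof (separated_solution_spec t ltac:(lra)); unfold ys in *; lra. }
  destruct Hclose as [T HT]; exists T; intros t Ht.
  destruct (HT t Ht); rewrite Rabs_left; lra.
Qed.

Lemma exists_separated_solution : exists (S : R -> R) (tm : R),
  tm < 0 /\ S 0 = y0 /\
  (forall t, tm < t -> is_derive S t (G (S t)) /\ S t < 1) /\
  (forall t, 0 <= t -> y0 <= S t) /\
  is_lim S p_infty 1.
Proof.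
  exists separated_solution, (travel_time (y0 - 1)).
  pose proof travel_time_below_lt_0.
  split; [exact travel_time_below_lt_0 | split; [exact separated_solution_0 | split; [| split]]].
  - intros t Ht; split; [now apply is_derive_Reals, is_derive_separated_solution|].
    apply separated_solution_spec, Ht.
  - intros t Ht; rewrite <- separated_solution_0 at 1; apply separated_solution_le; lra.
  - exact is_lim_separated_solution.
Qed.

End Separation.

(** * Uniqueness *)

Lemma le_0_of_le_small (x K d : R) : 0 < d -> (forall e, 0 < e < d -> x <= K * e) -> x <= 0.
Proof.
  intros Hd Hx; apply Rnot_lt_le; intros Hpos.
  set (e := Rmin (d / 2) (x / (2 * (Rabs K + 1)))).
  pose proof (Rabs_pos K); pose proof (Rle_abs K).
  assert (He : 0 < e) by (apply Rmin_pos; [lra | apply Rdiv_lt_0_compat; lra]).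
  assert (Hed : e < d) by (pose proof (Rmin_l (d / 2) (x / (2 * (Rabs K + 1)))); unfold e in *; lra).
  assert (Hex : e * (2 * (Rabs K + 1)) <= x).
  { apply Rle_trans with (x / (2 * (Rabs K + 1)) * (2 * (Rabs K + 1))); [|right; field; lra].
    apply Rmult_le_compat_r; [lra | apply Rmin_r]. }
  pose proof (Hx e (conj He Hed)); nra.
Qed.

Lemma sq_dist_exp_nonincr (f S1 S2 : R -> R) (L K t : R) :
  (forall x y, x <= K -> y <= K -> Rabs (f x - f y) <= L * Rabs (x - y)) ->
  (forall s, 0 < s -> is_derive S1 s (f (S1 s))) ->
  (forall s, 0 < s -> is_derive S2 s (f (S2 s))) ->
  (forall s, 0 < s <= t -> S1 s <= K /\ S2 s <= K) ->
  forall e, 0 < e <= t ->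
  (S1 t - S2 t) ^ 2 * exp (- (2 * L * t)) <= (S1 e - S2 e) ^ 2 * exp (- (2 * L * e)).
Proof.
  intros Hlip D1 D2 HK e He.
  set (w := fun s => (S1 s - S2 s) ^ 2 * exp (- (2 * L * s))).
  set (dw := fun s => 2 * ((S1 s - S2 s) * (f (S1 s) - f (S2 s)) - L * (S1 s - S2 s) ^ 2)
                      * exp (- (2 * L * s))).
  assert (Hwd : forall s, 0 < s -> is_derive w s (dw s)).
  { intros s Hs; unfold w, dw; auto_derive.
    - repeat split; [exists (f (S1 s)); now apply D1 | exists (f (S2 s)); now apply D2].
    - replace (Derive (fun x => S1 x) s) with (f (S1 s)) by (symmetry; apply is_derive_unique, D1, Hs).
      replace (Derive (fun x => S2 x) s) with (f (S2 s)) by (symmetry; apply is_derive_unique, D2, Hs).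
      ring. }
  assert (Hdw : forall s, 0 < s <= t -> dw s <= 0).
  { intros s Hs; unfold dw; destruct (HK s Hs) as [HK1 HK2].
    pose proof (Hlip _ _ HK1 HK2) as Hl.
    set (u := S1 s - S2 s) in *; set (v := f (S1 s) - f (S2 s)) in *.
    assert (u * v <= L * u ^ 2).
    { apply Rle_trans with (Rabs u * Rabs v); [rewrite <- Rabs_mult; apply RRle_abs|].
      replace (L * u ^ 2) with (Rabs u * (L * Rabs u)) by (rewrite <- (pow2_abs u); ring).
      apply Rmult_le_compat_l; [apply Rabs_pos | exact Hl]. }
    pose proof (exp_pos (- (2 * L * s))); nra. }
  destruct (Req_dec e t) as [->|Hne]; [lra|].
  destruct (MVT_gen w e t dw) as [c [Hc Ec]].
  - intros x Hx; rewrite Rmin_left, Rmax_right in Hx by lra; apply Hwd; lra.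
  - intros x Hx; rewrite Rmin_left, Rmax_right in Hx by lra.
    apply (is_derive_continuity_pt _ _ _ (Hwd x ltac:(lra))).
  - rewrite Rmin_left, Rmax_right in Hc by lra.
    pose proof (Hdw c ltac:(lra)); change (w t <= w e); nra.
Qed.

Section Solutions.

Variables (l S0 : R).
Hypothesis hl : 0 < l.

Lemma is_solution_right_bound (S : R -> R) : is_solution l S0 S ->
  exists d, 0 < d /\ forall h, 0 < h < d -> Rabs (S h - S0) <= (Rabs (A_ l S0) + 1) * h.
Proof.
  intros [H0 [_ [_ Hlim]]]; rewrite H0 in Hlim.
  destruct (Hlim (fun y => Rabs (y - A_ l S0) < 1)) as [d Hd].
  { exists (mkposreal 1 Rlt_0_1); intros y Hy; exact Hy. }
  exists d; split; [apply cond_pos|]; intros h Hh.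
  assert (Hq : Rabs ((S h - S0) / h - A_ l S0) < 1).
  { apply Hd; [|lra].
    change (Rabs (h - 0) < d); rewrite Rminus_0_r, Rabs_right; lra. }
  replace (S h - S0) with ((S h - S0) / h * h) by (field; lra).
  rewrite Rabs_mult, (Rabs_right h) by lra; apply Rmult_le_compat_r; [lra|].
  pose proof (Rabs_triang_inv ((S h - S0) / h) (A_ l S0)); lra.
Qed.

Lemma is_solution_bounded (S : R -> R) : is_solution l S0 S ->
  forall t, 0 < t -> exists B, forall s, 0 <= s <= t -> S s <= B.
Proof.
  intros Hsol t Ht; destruct (is_solution_right_bound S Hsol) as [d [Hd Hb]].
  destruct Hsol as [H0 [_ [HD _]]].
  set (e := Rmin d t / 2).
  assert (He : 0 < e) by (unfold e; pose proof (Rmin_pos d t Hd Ht); lra).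
  assert (Hed : e < d /\ e < t) by (unfold e; pose proof (Rmin_l d t); pose proof (Rmin_r d t); lra).
  assert (Hc : forall c, e <= c <= t -> continuity_pt S c)
    by (intros c Hc; apply (is_derive_continuity_pt _ _ _ (HD c ltac:(lra)))).
  destruct (continuity_ab_maj S e t ltac:(lra) Hc) as [sM [HsM _]].
  set (C := Rabs (A_ l S0) + 1) in *; assert (0 < C) by (unfold C; pose proof (Rabs_pos (A_ l S0)); lra).
  exists (Rmax (S sM) (S0 + C * t)); intros s Hs.
  destruct (Rle_or_lt e s); [eapply Rle_trans; [apply HsM; lra | apply Rmax_l]|].
  eapply Rle_trans; [|apply Rmax_r].
  destruct (Req_dec s 0) as [->|Hs0]; [rewrite H0; nra|].
  pose proof (Hb s ltac:(lra)); pose proof (RRle_abs (S s - S0)); nra.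
Qed.

Lemma is_solution_unique (S1 S2 : R -> R) : is_solution l S0 S1 -> is_solution l S0 S2 ->
  forall t, 0 <= t -> S1 t = S2 t.
Proof.
  intros H1 H2 t Ht.
  destruct (Req_dec t 0) as [->|Ht0]; [now rewrite (proj1 H1), (proj1 H2)|].
  destruct (is_solution_bounded S1 H1 t ltac:(lra)) as [B1 HB1].
  destruct (is_solution_bounded S2 H2 t ltac:(lra)) as [B2 HB2].
  set (K := Rmax (Rmax B1 B2) 1).
  assert (HK : 0 < K) by (unfold K; pose proof (Rmax_r (Rmax B1 B2) 1); lra).
  destruct (A_locally_lipschitz l hl K HK) as [L [HL Hlip]].
  destruct (is_solution_right_bound S1 H1) as [d1 [Hd1 Hr1]].
  destruct (is_solution_right_bound S2 H2) as [d2 [Hd2 Hr2]].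
  set (C := Rabs (A_ l S0) + 1) in *.
  assert (Hmono := sq_dist_exp_nonincr (A_ l) S1 S2 L K t Hlip
                     (proj1 (proj2 (proj2 H1))) (proj1 (proj2 (proj2 H2)))).
  assert (Hw : (S1 t - S2 t) ^ 2 * exp (- (2 * L * t)) <= 0).
  { apply (le_0_of_le_small _ (4 * C ^ 2) (Rmin (Rmin d1 d2) (Rmin t 1))).
    { repeat apply Rmin_pos; lra. }
    intros e He.
    pose proof (Rmin_l (Rmin d1 d2) (Rmin t 1)); pose proof (Rmin_r (Rmin d1 d2) (Rmin t 1)).
    pose proof (Rmin_l d1 d2); pose proof (Rmin_r d1 d2); pose proof (Rmin_l t 1); pose proof (Rmin_r t 1).
    apply Rle_trans with ((S1 e - S2 e) ^ 2 * exp (- (2 * L * e))); [apply Hmono; [|lra]|].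
    { intros s Hs; unfold K; pose proof (HB1 s ltac:(lra)); pose proof (HB2 s ltac:(lra)).
      pose proof (Rmax_l B1 B2); pose proof (Rmax_r B1 B2); pose proof (Rmax_l (Rmax B1 B2) 1); lra. }
    assert (Hd : Rabs (S1 e - S2 e) <= 2 * C * e).
    { pose proof (Hr1 e ltac:(lra)); pose proof (Hr2 e ltac:(lra)).
      replace (S1 e - S2 e) with ((S1 e - S0) - (S2 e - S0)) by ring.
      eapply Rle_trans; [apply Rabs_triang|]; rewrite Rabs_Ropp; lra. }
    assert (Hsq : (S1 e - S2 e) ^ 2 <= (2 * C * e) ^ 2).
    { rewrite <- (pow2_abs (S1 e - S2 e)); apply pow_incr; split; [apply Rabs_pos | exact Hd]. }
    assert (Hexp : exp (- (2 * L * e)) <= 1) by (rewrite <- exp_0; apply exp_le_exp; nra).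
    pose proof (exp_pos (- (2 * L * e))); pose proof (pow2_ge_0 (S1 e - S2 e)).
    apply Rle_trans with ((S1 e - S2 e) ^ 2); [nra|].
    apply Rle_trans with ((2 * C * e) ^ 2); [exact Hsq | nra]. }
  pose proof (exp_pos (- (2 * L * t))); pose proof (pow2_ge_0 (S1 t - S2 t)).
  apply Rminus_diag_uniq, Rsqr_0_uniq; unfold Rsqr; nra.
Qed.

End Solutions.

(** * Existence *)

Section Existence.

Variables (l S0 : R).
Hypothesis hl : 0 < l.
Hypothesis hS0 : 0 <= S0.

(* A solution defined on some [(tm, oo)] with [tm < 0], so that [t = 0] is interior. *)
Definition extended_solution (S : R -> R) (tm : R) : Prop :=
  tm < 0 /\ S 0 = S0 /\
  (forall t, tm < t -> is_derive S t (A_ l (S t))) /\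
  (forall t, 0 <= t -> 0 <= S t <= Rmax S0 1) /\
  is_lim S p_infty 1.

Lemma exists_extended_solution_lt_1 : S0 < 1 -> exists S tm, extended_solution S tm.
Proof.
  intros HS0; destruct (A_locally_lipschitz l hl 1 Rlt_0_1) as [L [HL Hlip]].
  destruct (exists_separated_solution (A_ l) S0 L (continuity_pt_A l hl) (A_gt_0 l hl) HL HS0)
    as [S [tm [Htm [H0 [HD [Hge Hlim]]]]]].
  { intros z Hz; pose proof (Hlip z 1 ltac:(lra) ltac:(lra)) as Hz1.
    rewrite A_1, Rminus_0_r, (Rabs_left1 (z - 1)) in Hz1 by lra.
    pose proof (Rle_abs (A_ l z)); lra. }
  exists S, tm; refine (conj Htm (conj H0 (conj _ (conj _ Hlim)))).
  - intros t Ht; apply HD, Ht.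
  - intros t Ht; pose proof (Hge t Ht); destruct (HD t ltac:(lra)); pose proof (Rmax_r S0 1); lra.
Qed.

(* Above the equilibrium, [2 - S] solves [y' = - A_l (2 - y)] from [2 - S0 < 1]. *)
Lemma exists_extended_solution_gt_1 : 1 < S0 -> exists S tm, extended_solution S tm.
Proof.
  intros HS0; destruct (A_locally_lipschitz l hl S0 ltac:(lra)) as [L [HL Hlip]].
  set (G := fun z => - A_ l (2 - z)).
  assert (G_cont : forall z, continuity_pt G z).
  { intros z; apply continuity_pt_opp.
    apply (continuity_pt_comp (fun z => 2 - z) (A_ l)); [|apply continuity_pt_A, hl].
    apply continuity_pt_minus; [apply continuity_pt_const; intros ? ?; reflexivity | apply continuity_pt_id]. }
  assert (G_pos : forall z, z < 1 -> 0 < G z).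
  { intros z Hz; unfold G; pose proof (A_lt_0 l hl (2 - z) ltac:(lra)); lra. }
  destruct (exists_separated_solution G (2 - S0) L G_cont G_pos HL ltac:(lra))
    as [S [tm [Htm [H0 [HD [Hge Hlim]]]]]].
  { intros z Hz; unfold G; pose proof (Hlip 1 (2 - z) ltac:(lra) ltac:(lra)) as Hz1.
    rewrite A_1, Rminus_0_l, Rabs_Ropp, (Rabs_left1 (1 - (2 - z))) in Hz1 by lra.
    pose proof (Rle_abs (- A_ l (2 - z))); rewrite Rabs_Ropp in *; lra. }
  exists (fun t => 2 - S t), tm; refine (conj Htm (conj _ (conj _ (conj _ _)))).
  - rewrite H0; ring.
  - intros t Ht; destruct (HD t Ht) as [Hd _].
    replace (A_ l (2 - S t)) with (0 - G (S t)) by (unfold G; ring).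
    exact (is_derive_minus (fun _ => 2) S t 0 (G (S t)) (is_derive_const 2 t) Hd).
  - intros t Ht; pose proof (Hge t Ht); destruct (HD t ltac:(lra)); pose proof (Rmax_l S0 1); lra.
  - apply (is_lim_minus (fun _ => 2) S p_infty 2 1 1); [apply is_lim_const | exact Hlim |].
    simpl; apply (f_equal (fun r => Some (Finite r))); ring.
Qed.

Lemma exists_extended_solution : exists S tm, extended_solution S tm.
Proof.
  destruct (Rtotal_order S0 1) as [Hlt|[Heq|Hgt]].
  - now apply exists_extended_solution_lt_1.
  - exists (fun _ => 1), (-1); unfold extended_solution.
    refine (conj _ (conj (eq_sym Heq) (conj _ (conj _ (is_lim_const 1 p_infty))))).
    + lra.
    + intros t _; rewrite A_1; exact (is_derive_const 1 t).
    + intros t _; pose proof (Rmax_r S0 1); lra.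
  - now apply exists_extended_solution_gt_1.
Qed.

Lemma extended_solution_Derive (S : R -> R) (tm : R) : extended_solution S tm ->
  forall t, tm < t -> continuous (Derive S) t /\ Derive S t = A_ l (S t).
Proof.
  intros [_ [_ [HD _]]] t Ht.
  assert (HDS : forall s, tm < s -> Derive S s = A_ l (S s)) by (intros; now apply is_derive_unique, HD).
  split; [|now apply HDS].
  apply (continuous_ext_loc _ (fun s => A_ l (S s))).
  - apply (filter_imp (fun s => tm < s)); [intros; symmetry; now apply HDS | now apply open_gt].
  - apply (continuous_comp S (A_ l)); [exact (is_derive_continuous _ _ _ (HD t Ht))|].
    apply continuity_pt_filterlim, continuity_pt_A, hl.
Qed.

End Existence.

Lemma is_derive_right_quotient (f : R -> R) (d : R) :
  is_derive f 0 d -> filterlim (fun h => (f h - f 0) / h) (at_right 0) (locally d).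
Proof.
  intros Hd%is_derive_Reals P [eps HP].
  destruct (Hd eps (cond_pos eps)) as [delta Hdelta].
  exists delta; intros h Hh Hpos; apply HP.
  change (Rabs (h - 0) < delta) in Hh; rewrite Rminus_0_r in Hh.
  change (Rabs ((f h - f 0) / h - d) < eps).
  specialize (Hdelta h ltac:(lra) Hh); rewrite Rplus_0_l in Hdelta; exact Hdelta.
Qed.

Theorem theorem4p1 (l : R) (hl : 0 < l) (S0 : R) (hS0 : 0 <= S0) :
  exists S : R -> R,
    is_solution l S0 S /\
    (forall S' : R -> R, is_solution l S0 S' -> forall t, 0 <= t -> S' t = S t) /\
    (exists M : R, forall t, 0 <= t -> Rabs (S t) <= M) /\
    (forall t, 0 < t -> continuous (Derive S) t) /\
    filterlim (Derive S) (at_right 0) (locally (A_ l S0)) /\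
    is_lim S p_infty 1 /\
    (forall t, 0 <= t -> 0 <= S t <= Rmax S0 1).
Proof.
  destruct (exists_extended_solution l S0 hl hS0) as [S [tm Hext]].
  pose proof (extended_solution_Derive l S0 hl S tm Hext) as HDS.
  destruct Hext as [Htm [H0 [HD [Hbound Hlim]]]].
  assert (Hsol : is_solution l S0 S).
  { refine (conj H0 (conj (fun t Ht => proj1 (Hbound t Ht)) (conj (fun t (Ht : 0 < t) => HD t (Rlt_trans _ _ _ Htm Ht)) _))).
    apply is_derive_right_quotient, HD, Htm. }
  exists S; refine (conj Hsol (conj _ (conj _ (conj _ (conj _ (conj Hlim Hbound)))))).
  - intros S' HS' t Ht; exact (is_solution_unique l S0 hl S' S HS' Hsol t Ht).
  - exists (Rmax S0 1); intros t Ht; destruct (Hbound t Ht); rewrite Rabs_right; lra.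
  - intros t Ht; apply HDS; lra.
  - destruct (HDS 0 Htm) as [Hc HD0]; unfold continuous in Hc; rewrite HD0, H0 in Hc.
    intros P HP; destruct (Hc P HP) as [e He]; exists e; intros y Hy _; exact (He y Hy).
Qed.
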